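(* Let $S$ be a semigroup with finite $\mathcal{R}$-height, and let $A$ be a left ideal of $S$. Let $T$ be a right simple semigroup with no idempotent, disjoint from $S$, and let $U$ be the semigroup defined by the presentation with generating set $S\cup T$ and defining relations $ab=a\cdot b$, $cd=c\cdot d$ and $ac=c$ for all $a,b\in S$ and $c,d\in T$ (where $a\cdot b$ and $c\cdot d$ denote the products in $S$ and in $T$ respectively). Fix $c\in T$ and let $B=T^1(A\cup\{c\})$, a left ideal of $U$. Then $\mathrm{H}_{\mathcal{R}}(U)=\mathrm{H}_{\mathcal{R}}(S)+1$ and $\mathrm{H}_{\mathcal{R}}(B)=\mathrm{H}_{\mathcal{R}}(A)+2$.
   Context: A semigroup is right simple if it has no proper right ideals. A presentation $\langle X\mid R\rangle$ defines the quotient of the free semigroup on $X$ by the congruence generated by $R$. $T^1$ denotes $T$ with an identity adjoined. Green's preorder on a semigroup $M$: $u\leq_{\mathcal{R}} v$ iff $uM^1\subseteq vM^1$; $\mathcal{R}$ is the associated equivalence; the $\mathcal{R}$-height $\mathrm{H}_{\mathcal{R}}(M)$ is the supremum of cardinalities of chains in the poset of $\mathcal{R}$-classes. For $A$ and $B$ the $\mathcal{R}$-height is computed in $A$ and $B$ as semigroups in their own right. A left ideal is a non-empty subset $A$ with $SA\subseteq A$. *)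

From Stdlib Require Import List Arith.
Import ListNotations.
Set Implicit Arguments.

(** The carrier M comes with a binary operation [mul], an equivalence [eqv]
    (equality of elements; [eq] for honest types, the generated congruence
    for presented semigroups), and a subset [P] (the sub-semigroup inside
    which Green's relation is computed "as a semigroup in its own right"). *)
Section Green.
Variables (M : Type) (eqv : M -> M -> Prop) (mul : M -> M -> M) (P : M -> Prop).

(* u <=_R v  iff  u P^1 subset of v P^1, i.e. u = v or u = v w with w in P *)
Definition leR (u v : M) : Prop := eqv u v \/ exists w, P w /\ eqv u (mul v w).

Definition ltR (u v : M) : Prop := leR u v /\ ~ leR v u.

Fixpoint Rdesc (l : list M) : Prop :=
  match l with
  | x :: ((y :: _) as t) => ltR y x /\ Rdesc t
  | _ => True
  end.

Definition Rchain (l : list M) : Prop := Forall P l /\ Rdesc l.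

(* R-height as an extended natural: [Some n] = n, [None] = infinite *)
Definition has_R_height (h : option nat) : Prop :=
  match h with
  | Some n => (exists l, Rchain l /\ length l = n) /\
              (forall l, Rchain l -> length l <= n)
  | None => forall n, exists l, Rchain l /\ length l = n
  end.
End Green.

Definition oplus (h : option nat) (k : nat) : option nat :=
  match h with Some n => Some (n + k) | None => None end.

Definition associative_op {X : Type} (m : X -> X -> X) : Prop :=
  forall a b c, m a (m b c) = m (m a b) c.

Definition is_left_ideal {X : Type} (m : X -> X -> X) (A : X -> Prop) : Prop :=
  (exists a, A a) /\ forall s a, A a -> A (m s a).

Definition is_right_ideal {X : Type} (m : X -> X -> X) (I : X -> Prop) : Prop :=
  (exists a, I a) /\ forall a t, I a -> I (m a t).

Definition right_simple {X : Type} (m : X -> X -> X) : Prop :=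
  forall I, is_right_ideal m I -> forall x, I x.

Definition word (X : Type) : Type := (X * list X)%type.

Definition wmul {X : Type} (u v : word X) : word X :=
  (fst u, snd u ++ fst v :: snd v).

Definition letter {X : Type} (x : X) : word X := (x, []).

Inductive cong {X : Type} (R : word X -> word X -> Prop) : word X -> word X -> Prop :=
| cong_base u v : R u v -> cong R u v
| cong_refl u : cong R u u
| cong_sym u v : cong R u v -> cong R v u
| cong_trans u v w : cong R u v -> cong R v w -> cong R u w
| cong_mull w u v : cong R u v -> cong R (wmul w u) (wmul w v)
| cong_mulr w u v : cong R u v -> cong R (wmul u w) (wmul v w).

Section U.
Variables (S T : Type) (mulS : S -> S -> S) (mulT : T -> T -> T).

Inductive Urel : word (S + T) -> word (S + T) -> Prop :=
| Urel_S a b : Urel (inl a, [inl b]) (letter (inl (mulS a b)))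
| Urel_T c d : Urel (inr c, [inr d]) (letter (inr (mulT c d)))
| Urel_ST a c : Urel (inl a, [inr c]) (letter (inr c)).

Definition Ueq : word (S + T) -> word (S + T) -> Prop := cong Urel.

(* B = T^1 (A u {c}) as a subset of U (closed under Ueq) *)
Definition Bset (A : S -> Prop) (c : T) (w : word (S + T)) : Prop :=
  exists u, ((exists a, A a /\ u = letter (inl a)) \/ u = letter (inr c)) /\
            (Ueq w u \/ exists t : T, Ueq w (wmul (letter (inr t)) u)).
End U.

(* Every element of U has a unique normal form a, t or t a (a in S, t in T), so
   U = S + T + TS, where S is a subsemigroup and I = T + TS is an ideal whose
   elements lie strictly R-below those of S.  Right simplicity of T makes I a
   single R-class, so a chain of U is a chain of S followed by at most one
   element of I.  In B = A + {c} + TA + Tc the part T(A + {c}) is likewise a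
   single R-class, the minimal one, and c lies strictly above it: t c = c
   would make v c idempotent, where c v = t.  So a chain of B is a chain of A
   followed by at most c and one element of T(A + {c}). *)

From Stdlib Require Import List Arith Lia.
Import ListNotations.

Lemma Rdesc_app {M : Type} (eqv : M -> M -> Prop) (mul : M -> M -> M)
    (P : M -> Prop) (l m : list M) :
  Rdesc eqv mul P l -> Rdesc eqv mul P m ->
  (forall x y, In x l -> In y m -> ltR eqv mul P y x) ->
  Rdesc eqv mul P (l ++ m).
Proof.
  induction l as [|x l IH]; simpl; [auto|].
  intros Hl Hm Hlm. destruct l as [|x' l'].
  - destruct m as [|y m']; simpl; [auto|].
    split; [apply Hlm; simpl; auto|exact Hm].
  - destruct Hl as [Hx'x Hl]. split; [exact Hx'x|].
    apply IH; auto.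
Qed.

Section HeightTransfer.
Variables (M N : Type) (eqv : M -> M -> Prop) (mul : M -> M -> M) (P : M -> Prop)
  (mulN : N -> N -> N) (Q : N -> Prop) (f : M -> N) (g : N -> M).
Hypotheses (eqv_iff : forall u v, eqv u v <-> f u = f v)
  (f_morph : forall u v, f (mul u v) = mulN (f u) (f v))
  (fgK : forall n, f (g n) = n) (P_iff : forall u, P u <-> Q (f u)).

Lemma leR_transfer u v : leR eqv mul P u v <-> leR (@eq N) mulN Q (f u) (f v).
Proof.
  unfold leR. split.
  - intros [H|[w [Hw H]]]; [left; apply eqv_iff; exact H|right; exists (f w)].
    rewrite <- f_morph, <- P_iff, <- eqv_iff. auto.
  - intros [H|[w [Hw H]]]; [left; apply eqv_iff; exact H|right; exists (g w)].
    rewrite P_iff, eqv_iff, f_morph, fgK. auto.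
Qed.

Lemma Rdesc_transfer l : Rdesc eqv mul P l <-> Rdesc (@eq N) mulN Q (map f l).
Proof.
  induction l as [|x [|y l] IH]; simpl in *; try tauto.
  unfold ltR. rewrite !leR_transfer, IH. tauto.
Qed.

Lemma Rchain_transfer l : Rchain eqv mul P l <-> Rchain (@eq N) mulN Q (map f l).
Proof.
  unfold Rchain. rewrite Rdesc_transfer, Forall_map.
  split; intros [HP HR]; split; auto; revert HP; apply Forall_impl;
    intro; apply P_iff.
Qed.

Lemma has_R_height_transfer h :
  has_R_height (@eq N) mulN Q h -> has_R_height eqv mul P h.
Proof.
  assert (map_fg : forall l, map f (map g l) = l).
  { intro l. rewrite map_map. erewrite map_ext; [apply map_id|]. exact fgK. }
  destruct h as [n|]; simpl.
  - intros [[l [Hl Hlen]] Hmax]. split.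
    + exists (map g l). rewrite Rchain_transfer, map_fg, length_map. auto.
    + intros l' Hl'. rewrite <- (length_map f). apply Hmax, Rchain_transfer, Hl'.
  - intros Hinf n. destruct (Hinf n) as [l [Hl Hlen]].
    exists (map g l). rewrite Rchain_transfer, map_fg, length_map. auto.
Qed.
End HeightTransfer.

Section RightSimple.
Context {T : Type} {mulT : T -> T -> T}.
Hypotheses (assocT : associative_op mulT) (hTsimple : right_simple mulT).

Lemma right_simple_div t t' : exists u, mulT t u = t'.
Proof.
  apply (hTsimple (fun x => exists u, mulT t u = x)). split.
  - exists (mulT t t), t. reflexivity.
  - intros x t0 [u <-]. exists (mulT u t0). apply assocT.
Qed.

Lemma right_simple_no_left_fixed (hTnoid : forall e, mulT e e <> e) u c :
  mulT u c <> c.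
Proof.
  intro Huc. destruct (right_simple_div c u) as [v Hcv].
  apply (hTnoid (mulT v c)).
  rewrite <- assocT, (assocT c v c), Hcv, Huc. reflexivity.
Qed.
End RightSimple.

Section NormalForm.
Variables (S T : Type) (mulS : S -> S -> S) (mulT : T -> T -> T).
Hypotheses (assocS : associative_op mulS) (assocT : associative_op mulT).

Inductive nf := NS (a : S) | NT (t : T) | NTS (t : T) (a : S).

Definition nf_mul (x y : nf) : nf :=
  match x, y with
  | NS a, NS b => NS (mulS a b)
  | NS _, y => y
  | NT t, NS a => NTS t a
  | NT t, NT t' => NT (mulT t t')
  | NT t, NTS t' a => NTS (mulT t t') a
  | NTS t a, NS b => NTS t (mulS a b)
  | NTS t _, NT t' => NT (mulT t t')
  | NTS t _, NTS t' b => NTS (mulT t t') b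
  end.

Lemma nf_mul_assoc : associative_op nf_mul.
Proof. intros [] [] []; simpl; rewrite ?assocS, ?assocT; reflexivity. Qed.

Definition nf_of_gen (x : S + T) : nf :=
  match x with inl a => NS a | inr t => NT t end.

Definition nf_of_word (u : word (S + T)) : nf :=
  fold_left (fun x y => nf_mul x (nf_of_gen y)) (snd u) (nf_of_gen (fst u)).

Definition word_of_nf (x : nf) : word (S + T) :=
  match x with
  | NS a => letter (inl a)
  | NT t => letter (inr t)
  | NTS t a => (inr t, [inl a])
  end.

Lemma nf_of_word_of_nf x : nf_of_word (word_of_nf x) = x.
Proof. destruct x; reflexivity. Qed.

Lemma nf_of_word_mul u v :
  nf_of_word (wmul u v) = nf_mul (nf_of_word u) (nf_of_word v).
Proof.
  destruct u as [x l], v as [y m]. unfold nf_of_word, wmul; simpl.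
  rewrite fold_left_app. simpl. generalize (nf_of_gen y) as z.
  induction m as [|y' m IH]; intro z; simpl; auto.
  rewrite <- IH, nf_mul_assoc. reflexivity.
Qed.

Lemma Ueq_nf_of_word u v : Ueq mulS mulT u v -> nf_of_word u = nf_of_word v.
Proof.
  induction 1 as [u v []| | | |w u v _ IH|w u v _ IH];
    try reflexivity; try congruence; rewrite !nf_of_word_mul, IH; reflexivity.
Qed.

Lemma Ueq_word_of_nf_letter x y :
  Ueq mulS mulT (wmul (word_of_nf x) (letter y))
    (word_of_nf (nf_mul x (nf_of_gen y))).
Proof.
  unfold Ueq. destruct x as [a|t|t a], y as [b|t']; simpl;
    try (apply cong_base; constructor).
  - apply cong_refl.
  - apply (@cong_mull _ _ (letter (inr t)) (inl a, [inl b]) (letter (inl (mulS a b)))).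
    apply cong_base; constructor.
  - apply cong_trans with (wmul (letter (inr t)) (letter (inr t'))).
    + apply (@cong_mull _ _ (letter (inr t)) (inl a, [inr t']) (letter (inr t'))).
      apply cong_base; constructor.
    + apply cong_base; constructor.
Qed.

Lemma Ueq_word_of_nf u : Ueq mulS mulT u (word_of_nf (nf_of_word u)).
Proof.
  destruct u as [x l]. induction l as [|y l IH] using rev_ind.
  - destruct x; apply cong_refl.
  - change (x, l ++ [y]) with (wmul (x, l) (letter y)).
    eapply cong_trans; [apply cong_mulr, IH|].
    rewrite nf_of_word_mul. apply Ueq_word_of_nf_letter.
Qed.

Lemma Ueq_iff u v : Ueq mulS mulT u v <-> nf_of_word u = nf_of_word v.
Proof.
  split; [apply Ueq_nf_of_word|]. intro Huv.
  eapply cong_trans; [apply Ueq_word_of_nf|].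
  rewrite Huv. apply cong_sym, Ueq_word_of_nf.
Qed.

Lemma has_R_height_of_nf (P : word (S + T) -> Prop) (Q : nf -> Prop) h :
  (forall u, P u <-> Q (nf_of_word u)) ->
  has_R_height (@eq nf) nf_mul Q h ->
  has_R_height (Ueq mulS mulT) (@wmul (S + T)) P h.
Proof.
  intro P_iff.
  apply has_R_height_transfer
    with (f := nf_of_word) (g := word_of_nf) (mulN := nf_mul) (Q := Q); auto.
  - exact Ueq_iff.
  - exact nf_of_word_mul.
  - exact nf_of_word_of_nf.
Qed.

Definition isS (x : nf) : Prop := match x with NS _ => True | _ => False end.

Lemma nonS_mul x w : ~ isS x -> ~ isS (nf_mul x w).
Proof. destruct x, w; simpl; tauto. Qed.

Section Chains.
Variables (PS : S -> Prop) (Q : nf -> Prop).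
Hypothesis Q_NS : forall a, Q (NS a) <-> PS a.

Notation leQ := (leR (@eq nf) nf_mul Q).
Notation ltQ := (ltR (@eq nf) nf_mul Q).
Notation RchainQ := (Rchain (@eq nf) nf_mul Q).

Lemma ltR_irrefl x : ~ ltQ x x.
Proof. intros [_ Hxx]. apply Hxx. left. reflexivity. Qed.

Lemma leR_nonS x y : ~ isS x -> leQ y x -> ~ isS y.
Proof. intros Hx [<-|[w [_ ->]]]; auto. apply nonS_mul, Hx. Qed.

Lemma leR_NS a b : leQ (NS a) (NS b) <-> leR (@eq S) mulS PS a b.
Proof.
  unfold leR. split.
  - intros [H|[[c| |] [Hc H]]]; try discriminate H; injection H; auto.
    intros ->. right. exists c. rewrite <- Q_NS. auto.
  - intros [->|[c [Hc ->]]]; [left; reflexivity|right].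
    exists (NS c). rewrite Q_NS. auto.
Qed.

Lemma ltR_nonS_NS y a : Q y -> ~ isS y -> ltQ y (NS a).
Proof.
  intros Hy Hny. split.
  - right. exists y. split; auto. destruct y; simpl in *; tauto.
  - intros Hle. apply (leR_nonS _ _ Hny Hle). exact I.
Qed.

Lemma ltR_NS a b : ltQ (NS a) (NS b) <-> ltR (@eq S) mulS PS a b.
Proof. unfold ltR. rewrite !leR_NS. reflexivity. Qed.

Lemma Rdesc_map_NS l :
  Rdesc (@eq S) mulS PS l -> Rdesc (@eq nf) nf_mul Q (map NS l).
Proof.
  induction l as [|a [|b l] IH]; simpl; auto.
  intros [Hba Hdl]. split; [apply ltR_NS, Hba|exact (IH Hdl)].
Qed.

Lemma Rdesc_nonS x l :
  ~ isS x -> Rdesc (@eq nf) nf_mul Q (x :: l) -> Forall (fun y => ~ isS y) (x :: l).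
Proof.
  revert x. induction l as [|y l IH]; intros x Hnx Hdl; auto.
  destruct Hdl as [[Hyx _] Hdl]. constructor; auto.
  apply IH; [apply (leR_nonS x)|]; assumption.
Qed.

Lemma Rchain_map_NS_app l tl :
  Rchain (@eq S) mulS PS l -> RchainQ tl -> Forall (fun y => ~ isS y) tl ->
  RchainQ (map NS l ++ tl).
Proof.
  intros [Hl Hdl] [Htl Hdtl] Hntl. split.
  - apply Forall_app. split; auto.
    apply Forall_map. revert Hl. apply Forall_impl. intro; apply Q_NS.
  - apply Rdesc_app; auto.
    + apply Rdesc_map_NS, Hdl.
    + intros x y Hx Hy. apply in_map_iff in Hx as [a [<- _]].
      rewrite Forall_forall in Htl, Hntl. apply ltR_nonS_NS; auto.
Qed.

(* Once a chain leaves S it never comes back, because the complement of S is a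
   right ideal. *)
Lemma Rchain_split l :
  RchainQ l -> exists l1 l2, l = map NS l1 ++ l2 /\
    Rchain (@eq S) mulS PS l1 /\ RchainQ l2 /\ Forall (fun y => ~ isS y) l2.
Proof.
  induction l as [|x l IH]; intros [Hl Hdl].
  - exists [], []. repeat split; simpl; auto.
  - inversion Hl as [|? ? Hx Hl']; subst.
    destruct x as [a|t|t a]; [|exists [], (NT t :: l)|exists [], (NTS t a :: l)].
    2,3: split; [reflexivity|]; split; [split; simpl; auto|];
      split; [split; assumption|]; apply Rdesc_nonS; simpl; auto.
    assert (Hdl' : Rdesc (@eq nf) nf_mul Q l) by (destruct l; simpl in *; tauto).
    destruct (IH (conj Hl' Hdl')) as [l1 [l2 [-> [[Hl1 Hdl1] Hl2]]]].
    exists (a :: l1), l2. split; [reflexivity|]. split; [split|exact Hl2].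
    + constructor; [apply Q_NS|]; assumption.
    + destruct l1 as [|b l1]; simpl in *; [exact I|].
      split; [apply ltR_NS, Hdl|exact Hdl1].
Qed.

Lemma has_R_height_nf_oplus h k tl :
  RchainQ tl -> Forall (fun y => ~ isS y) tl -> length tl = k ->
  (forall l, RchainQ l -> Forall (fun y => ~ isS y) l -> length l <= k) ->
  has_R_height (@eq S) mulS PS h -> has_R_height (@eq nf) nf_mul Q (oplus h k).
Proof.
  intros Htl Hntl Hk Hmax. destruct h as [n|]; simpl.
  - intros [[l [Hl Hlen]] HmaxS]. split.
    + exists (map NS l ++ tl). split; [apply Rchain_map_NS_app; auto|].
      rewrite length_app, length_map. lia.
    + intros l' Hl'.
      destruct (Rchain_split l' Hl') as [l1 [l2 [-> [Hl1 [Hl2 Hnl2]]]]].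
      rewrite length_app, length_map.
      specialize (HmaxS l1 Hl1). specialize (Hmax l2 Hl2 Hnl2). lia.
  - intros Hinf n. destruct (Hinf n) as [l [Hl Hlen]].
    exists (map NS l ++ []). split.
    + apply Rchain_map_NS_app; [exact Hl|split; simpl; auto|constructor].
    + rewrite app_nil_r, length_map. exact Hlen.
Qed.
End Chains.

Hypotheses (hTsimple : right_simple mulT) (hTnoid : forall e : T, mulT e e <> e).

Lemma nonS_leR_whole x y :
  ~ isS x -> ~ isS y -> leR (@eq nf) nf_mul (fun _ => True) x y.
Proof.
  intros Hx Hy. right.
  destruct y as [|t|t a], x as [|t'|t' a']; simpl in *; try tauto;
    destruct (right_simple_div assocT hTsimple t t') as [u <-].
  all: first [ exists (NT u); split; [exact I|reflexivity]
             | exists (NTS u a'); split; [exact I|reflexivity] ].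
Qed.

Lemma Rchain_nonS_length_le1 l :
  Rchain (@eq nf) nf_mul (fun _ => True) l -> Forall (fun y => ~ isS y) l ->
  length l <= 1.
Proof.
  intros [_ Hdl] Hnl. destruct l as [|x [|y l]]; simpl; try lia. exfalso.
  inversion Hnl as [|? ? Hx Hnl']; inversion Hnl'; subst.
  destruct Hdl as [[_ Hxy] _]. apply Hxy, nonS_leR_whole; auto.
Qed.

Lemma has_R_height_nf_whole n (c : T) :
  has_R_height (@eq S) mulS (fun _ => True) (Some n) ->
  has_R_height (@eq nf) nf_mul (fun _ => True) (Some (n + 1)).
Proof.
  apply (has_R_height_nf_oplus (fun _ => True) (fun _ => True) (fun _ => iff_refl True)
           (Some n) 1 [NT c]).
  - split; simpl; auto.
  - constructor; simpl; auto.
  - reflexivity.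
  - apply Rchain_nonS_length_le1.
Qed.

Variables (A : S -> Prop) (c : T).
Hypothesis hA : is_left_ideal mulS A.

(* [TBnf] is T (A + {c}) in normal form, [Bnf] is B = A + {c} + T (A + {c}). *)
Definition TBnf (x : nf) : Prop :=
  (exists t a, A a /\ x = NTS t a) \/ (exists t, x = NT (mulT t c)).

Definition Bnf (x : nf) : Prop := (exists a, A a /\ x = NS a) \/ x = NT c \/ TBnf x.

Notation leB := (leR (@eq nf) nf_mul Bnf).
Notation ltB := (ltR (@eq nf) nf_mul Bnf).

Lemma TBnf_mul x w : TBnf x -> Bnf w -> TBnf (nf_mul x w).
Proof.
  intros [[t [a [Ha ->]]]|[t ->]]
         [[b [Hb ->]]|[->|[[t' [b [Hb ->]]]|[t' ->]]]]; simpl.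
  - left. exists t, (mulS a b). split; auto. apply hA, Hb.
  - right. exists t. reflexivity.
  - left. exists (mulT t t'), b. auto.
  - right. exists (mulT t t'). rewrite assocT. reflexivity.
  - left. exists (mulT t c), b. auto.
  - right. exists (mulT t c). reflexivity.
  - left. exists (mulT (mulT t c) t'), b. auto.
  - right. exists (mulT (mulT t c) t'). rewrite assocT. reflexivity.
Qed.

Lemma TBnf_leR x y : TBnf x -> TBnf y -> leB x y.
Proof.
  intros Hx Hy. right.
  destruct Hy as [[t [a [_ ->]]]|[t ->]];
    [pose (ty := t)|pose (ty := mulT t c)];
    destruct Hx as [[t' [a' [Ha' ->]]]|[t' ->]];
    destruct (right_simple_div assocT hTsimple ty t') as [u Hu]; subst ty.
  all: first [ exists (NTS u a'); split; [right; right; left; eauto|]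
             | exists (NT (mulT u c)); split; [right; right; right; eauto|] ];
    simpl; rewrite ?assocT; congruence.
Qed.

Lemma TBnf_minimal x y : TBnf x -> ~ ltB y x.
Proof.
  intros Hx [[<-|[w [Hw ->]]] Hyx]; apply Hyx; [left; reflexivity|].
  apply TBnf_leR; auto. apply TBnf_mul; auto.
Qed.

Lemma NT_c_notin_TBnf : ~ TBnf (NT c).
Proof.
  intros [[t [a [_ H]]]|[t H]]; [discriminate H|]. injection H as H.
  exact (right_simple_no_left_fixed assocT hTsimple hTnoid t c (eq_sym H)).
Qed.

Lemma Bnf_nonS x : Bnf x -> ~ isS x -> x = NT c \/ TBnf x.
Proof. intros [[a [_ ->]]|Hx] Hnx; simpl in *; tauto. Qed.

Lemma Rchain_Bnf_nonS_length_le2 l :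
  Rchain (@eq nf) nf_mul Bnf l -> Forall (fun y => ~ isS y) l -> length l <= 2.
Proof.
  intros [HBl Hdl] Hnl. destruct l as [|x [|y [|z l]]]; simpl; try lia. exfalso.
  destruct Hdl as [Hyx [Hzy _]].
  apply Forall_forall with (x := x) in HBl as Hx, Hnl as Hnx;
  apply Forall_forall with (x := y) in HBl as Hy, Hnl as Hny; simpl; auto.
  destruct (Bnf_nonS y Hy Hny) as [->|HTy]; [|exact (TBnf_minimal _ _ HTy Hzy)].
  destruct (Bnf_nonS x Hx Hnx) as [->|HTx]; [|exact (TBnf_minimal _ _ HTx Hyx)].
  exact (ltR_irrefl _ _ Hyx).
Qed.

Lemma has_R_height_Bnf h :
  has_R_height (@eq S) mulS A h -> has_R_height (@eq nf) nf_mul Bnf (oplus h 2).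
Proof.
  assert (Hcc : TBnf (NT (mulT c c))) by (right; exists c; reflexivity).
  apply (has_R_height_nf_oplus A Bnf) with [NT c; NT (mulT c c)].
  - intro a. split; [|intro Ha; left; eauto].
    intros [[b [Hb H]]|[H|[[t [b [_ H]]]|[t H]]]]; try discriminate H.
    injection H as ->. exact Hb.
  - split.
    + constructor; [right; left; reflexivity|].
      constructor; [right; right; exact Hcc|constructor].
    + split; [split|exact I].
      * right. exists (NT c). split; [right; left|]; reflexivity.
      * intros [H|[w [Hw H]]]; apply NT_c_notin_TBnf; rewrite H; auto.
        apply TBnf_mul; auto.
  - repeat constructor; simpl; auto.
  - reflexivity.
  - apply Rchain_Bnf_nonS_length_le2.
Qed.

Lemma Bset_iff w : Bset mulS mulT A c w <-> Bnf (nf_of_word w).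
Proof.
  unfold Bset. split.
  - intros [u [[[a [Ha ->]]| ->] [Hw|[t Hw]]]];
      apply Ueq_iff in Hw; rewrite Hw, ?nf_of_word_mul; unfold Bnf, TBnf; simpl.
    + left. eauto.
    + right; right; left. eauto.
    + right; left. reflexivity.
    + right; right; right. eauto.
  - intros [[a [Ha Hw]]|[Hw|[[t [a [Ha Hw]]]|[t Hw]]]].
    + exists (letter (inl a)). split; [left; eauto|left; apply Ueq_iff, Hw].
    + exists (letter (inr c)). split; [right; reflexivity|left; apply Ueq_iff, Hw].
    + exists (letter (inl a)). split; [left; eauto|right; exists t].
      apply Ueq_iff. rewrite nf_of_word_mul. exact Hw.
    + exists (letter (inr c)). split; [right; reflexivity|right; exists t].
      apply Ueq_iff. rewrite nf_of_word_mul. exact Hw.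
Qed.
End NormalForm.

Theorem theorem4p8
  (S T : Type) (mulS : S -> S -> S) (mulT : T -> T -> T)
  (assocS : associative_op mulS) (assocT : associative_op mulT)
  (hSfin : exists n, has_R_height (@eq S) mulS (fun _ => True) (Some n))
  (A : S -> Prop) (hA : is_left_ideal mulS A)
  (hTsimple : right_simple mulT) (hTnoid : forall e : T, mulT e e <> e)
  (c : T) :
  (forall n, has_R_height (@eq S) mulS (fun _ => True) (Some n) ->
     has_R_height (Ueq mulS mulT) (@wmul (S + T)) (fun _ => True) (Some (n + 1)))
  /\
  (forall h, has_R_height (@eq S) mulS A h ->
     has_R_height (Ueq mulS mulT) (@wmul (S + T)) (Bset mulS mulT A c) (oplus h 2)).
Proof.
  split; [intros n HS|intros h HA].
  - apply has_R_height_of_nf with (Q := fun _ => True); try assumption; [tauto|].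
    apply has_R_height_nf_whole; assumption.
  - apply has_R_height_of_nf with (Q := @Bnf S T mulT A c); try assumption.
    + apply Bset_iff; assumption.
    + apply has_R_height_Bnf; assumption.
Qed.
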